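(* Let $I$ be a finite set and let $g_\bullet\colon\mathbb{Z}\to\mathbb{Z}$ be a gp map parametrised by $\mathbb{R}^I$. Then there exist finite sets $J,K$ and a gp map $\tilde g_\bullet\colon\mathbb{Z}\to\mathbb{Z}$ parametrised by $\mathbb{Z}^J\times[0,1)^K$ such that $\tilde g_\bullet$ extends $g_\bullet$ and $\tilde g_\bullet$ takes the form \[ \tilde g_{a,\beta} = \sum_{j\in J} a_j h^{(j)}_{\beta},\qquad a\in\mathbb{Z}^J,\ \beta\in[0,1)^K, \] where for each $j\in J$, $h^{(j)}_\bullet\colon\mathbb{Z}\to\mathbb{Z}$ is a gp map parametrised by $[0,1)^K$.
   Context: A generalised polynomial (gp) map $\mathbb{R}^d\to\mathbb{R}$ is an element of the smallest family containing all polynomial maps and closed under pointwise sum, pointwise product and pointwise integer part $\lfloor\cdot\rfloor$; a map $\mathbb{R}^d\to\mathbb{R}^m$ is gp if each coordinate is. For pairwise disjoint finite sets $I_r,I_i,I_f$ and $\Omega = \mathbb{R}^{I_r}\times\mathbb{Z}^{I_i}\times[0,1)^{I_f}$, a gp map $\mathbb{Z}\to\mathbb{Z}$ parametrised by $\Omega$ is a family $(g_\alpha)_{\alpha\in\Omega}$ of maps $\mathbb{Z}\to\mathbb{Z}$ such that $(\alpha,n)\mapsto g_\alpha(n)$ is the restriction to $\Omega\times\mathbb{Z}$ of a gp map $\mathbb{R}^{I_r\cup I_i\cup I_f}\times\mathbb{R}\to\mathbb{R}$. If $g_\bullet$ is parametrised by $\Omega$ and $h_\bullet$ by $\Omega'=\mathbb{R}^{J_r}\times\mathbb{Z}^{J_i}\times[0,1)^{J_f}$,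 we say $h_\bullet$ extends $g_\bullet$ if there is a gp map $\varphi\colon\mathbb{R}^{I_r\cup I_i\cup I_f}\to\mathbb{R}^{J_r\cup J_i\cup J_f}$ with $\varphi(\Omega)\subset\Omega'$ and $g_\alpha = h_{\varphi(\alpha)}$ for all $\alpha\in\Omega$. *)

From Stdlib Require Import Reals ZArith List FinFun.
Open Scope R_scope.

Definition gfloor (r : R) : R := IZR (Int_part r).

(* Syntax of generalised polynomial expressions in variables of type V. *)
Inductive gpexpr (V : Type) : Type :=
| gConst : R -> gpexpr V
| gVar : V -> gpexpr V
| gAdd : gpexpr V -> gpexpr V -> gpexpr V
| gMul : gpexpr V -> gpexpr V -> gpexpr V
| gFloor : gpexpr V -> gpexpr V.
Arguments gConst {V}. Arguments gVar {V}. Arguments gAdd {V}.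
Arguments gMul {V}. Arguments gFloor {V}.

Fixpoint geval {V : Type} (x : V -> R) (e : gpexpr V) : R :=
  match e with
  | gConst c => c
  | gVar v => x v
  | gAdd e1 e2 => geval x e1 + geval x e2
  | gMul e1 e2 => geval x e1 * geval x e2
  | gFloor e1 => gfloor (geval x e1)
  end.

(* gp maps R^V -> R: exactly the evaluations of gp expressions (the smallest
   family containing polynomials closed under +, *, floor). *)
Definition is_gp_fun {V : Type} (f : (V -> R) -> R) : Prop :=
  exists e : gpexpr V, forall x, f x = geval x e.

Definition is_gp_map {V W : Type} (phi : (V -> R) -> (W -> R)) : Prop :=
  forall w : W, is_gp_fun (fun x => phi x w).

(* Parameter vectors live in R^(Ir ⊔ Ii ⊔ If); Omega is the subset
   R^Ir x Z^Ii x [0,1)^If. *)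
Definition PVar (Ir Ii If : Type) : Type := (Ir + Ii + If)%type.

Definition in_Omega {Ir Ii If : Type} (x : PVar Ir Ii If -> R) : Prop :=
  (forall i : Ii, exists z : Z, x (inl (inr i)) = IZR z) /\
  (forall k : If, 0 <= x (inr k) < 1).

(* A gp map Z -> Z parametrised by Omega: a family g (only its values on
   Omega matter) such that (alpha, n) |-> g alpha n is the restriction to
   Omega x Z of a gp map R^(Ir ⊔ Ii ⊔ If) x R -> R (the extra variable
   None is the argument n). *)
Definition gp_param {Ir Ii If : Type} (g : (PVar Ir Ii If -> R) -> Z -> Z) : Prop :=
  exists e : gpexpr (option (PVar Ir Ii If)),
    forall x, in_Omega x -> forall n : Z,
      IZR (g x n) = geval (fun v => match v with Some u => x u | None => IZR n end) e.

Definition gp_extends {Ir Ii If Jr Ji Jf : Type}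
  (g : (PVar Ir Ii If -> R) -> Z -> Z) (h : (PVar Jr Ji Jf -> R) -> Z -> Z) : Prop :=
  exists phi : (PVar Ir Ii If -> R) -> (PVar Jr Ji Jf -> R),
    is_gp_map phi /\
    (forall x, in_Omega x -> in_Omega (phi x)) /\
    (forall x, in_Omega x -> forall n : Z, g x n = h (phi x) n).

Definition embK {J K : Type} (v : PVar Empty_set Empty_set K) : PVar Empty_set J K :=
  match v with
  | inl (inl e) => match e with end
  | inl (inr e) => match e with end
  | inr k => inr k
  end.

From Stdlib Require Import Reals ZArith List FinFun Lra.
Open Scope R_scope.

(* Call a function of (x, n) an integral combination if it is a finite sum
   sum_j a_j(x) h_j({b(x)}, n), where the a_j are integer-valued gp maps of x,
   {b(x)} is a finite family of fractional parts of gp maps of x shared by all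
   terms, and the h_j are integer-valued gp maps of these fractional parts and
   of n.  Every gp expression in (x, n) is a real combination sum_i c_i(x) M_i
   of integral combinations M_i.  This is stable under sums and products, and
   also under the integer part: writing c a_j = [c a_j] + {c a_j} splits a real
   combination as P + Q, with P an integral combination and Q a gp map of n and
   of fractional parts only, so that [P + Q] = P + [Q] is integral again.  An
   integer-valued g is its own integer part, hence an integral combination
   sum_j a_j(x) h_j({b(x)}, n), which is the required extension with the new
   integer parameters a_j(x) and the new [0,1)-parameters {b(x)}. *)

Definition sumR {A : Type} (f : A -> R) (l : list A) : R := fold_right Rplus 0 (map f l).

Lemma sumR_cons {A} (f : A -> R) a l : sumR f (a :: l) = f a + sumR f l.
Proof. reflexivity. Qed.

Lemma sumR_app {A} (f : A -> R) l1 l2 : sumR f (l1 ++ l2) = sumR f l1 + sumR f l2.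
Proof. induction l1 as [|a l1 IH]; unfold sumR in *; cbn in *; [ring|]. rewrite IH; ring. Qed.

Lemma sumR_map {A B} (f : B -> R) (g : A -> B) l : sumR f (map g l) = sumR (fun a => f (g a)) l.
Proof. unfold sumR; now rewrite map_map. Qed.

Lemma sumR_ext {A} (f g : A -> R) l : (forall a, In a l -> f a = g a) -> sumR f l = sumR g l.
Proof. intros H; unfold sumR; now rewrite (map_ext_in f g l H). Qed.

Lemma sumR_plus {A} (f g : A -> R) l : sumR (fun a => f a + g a) l = sumR f l + sumR g l.
Proof. induction l as [|a l IH]; unfold sumR in *; cbn in *; [ring|]. rewrite IH; ring. Qed.

Lemma sumR_mull {A} (c : R) (f : A -> R) l : c * sumR f l = sumR (fun a => c * f a) l.
Proof. induction l as [|a l IH]; unfold sumR in *; cbn in *; [ring|]. rewrite <- IH; ring. Qed.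

Lemma sumR_list_prod {A B} (f : A -> R) (g : B -> R) l1 l2 :
  sumR (fun p => f (fst p) * g (snd p)) (list_prod l1 l2) = sumR f l1 * sumR g l2.
Proof.
  induction l1 as [|a l1 IH]; [unfold sumR; cbn; ring|].
  cbn [list_prod]; rewrite sumR_app, IH, sumR_map, sumR_cons; cbn [fst snd].
  rewrite <- sumR_mull; ring.
Qed.

Lemma Finite_Empty_set : Finite Empty_set.
Proof. exists nil; intros []. Qed.

Lemma Finite_sum {A B} : Finite A -> Finite B -> Finite (A + B).
Proof.
  intros [l1 F1] [l2 F2]; exists (map inl l1 ++ map inr l2).
  intros [u|v]; apply in_or_app; [left|right]; now apply in_map.
Qed.

Lemma Listing_unit : Listing (tt :: nil).
Proof. split; [repeat constructor; intros []|intros []; now left]. Qed.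

Lemma Listing_sum {A B} (l1 : list A) (l2 : list B) :
  Listing l1 -> Listing l2 -> Listing (map inl l1 ++ map inr l2).
Proof.
  intros [N1 F1] [N2 F2]; split.
  - apply NoDup_app;
      try (apply Injective_map_NoDup; [intros ? ? E; now injection E|assumption]).
    intros s H1 H2.
    apply in_map_iff in H1 as [u [<- _]]; apply in_map_iff in H2 as [v [E _]].
    discriminate.
  - intros [u|v]; apply in_or_app; [left|right]; now apply in_map.
Qed.

Lemma NoDup_list_prod {A B} (l1 : list A) (l2 : list B) :
  NoDup l1 -> NoDup l2 -> NoDup (list_prod l1 l2).
Proof.
  intros N1 N2; induction N1 as [|a l1 Ha N1 IH]; cbn; [constructor|].
  apply NoDup_app; auto.
  - apply Injective_map_NoDup; auto. intros ? ? E; now injection E.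
  - intros [u v] H1 H2. apply in_map_iff in H1 as [w [E _]]; injection E as <- _.
    now apply in_prod_iff in H2 as [].
Qed.

Lemma Listing_list_prod {A B} (l1 : list A) (l2 : list B) :
  Listing l1 -> Listing l2 -> Listing (list_prod l1 l2).
Proof.
  intros [N1 F1] [N2 F2]; split; [now apply NoDup_list_prod|].
  intros [u v]; now apply in_prod.
Qed.

Definition is_int (r : R) : Prop := exists z : Z, r = IZR z.

Lemma is_int_add a b : is_int a -> is_int b -> is_int (a + b).
Proof. intros [x ->] [y ->]; exists (x + y)%Z; now rewrite plus_IZR. Qed.

Lemma is_int_mul a b : is_int a -> is_int b -> is_int (a * b).
Proof. intros [x ->] [y ->]; exists (x * y)%Z; now rewrite mult_IZR. Qed.

Lemma is_int_gfloor a : is_int (gfloor a).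
Proof. now exists (Int_part a). Qed.

Lemma is_int_sumR {A} (f : A -> R) l : (forall a, In a l -> is_int (f a)) -> is_int (sumR f l).
Proof.
  induction l as [|a l IH]; intros H; [now exists 0%Z|].
  apply is_int_add; [apply H; now left|apply IH; intros; apply H; now right].
Qed.

Lemma Int_part_IZR z : Int_part (IZR z) = z.
Proof. symmetry; apply Int_part_spec; lra. Qed.

Lemma gfloor_int p : is_int p -> gfloor p = p.
Proof. intros [z ->]; unfold gfloor; now rewrite Int_part_IZR. Qed.

Lemma gfloor_int_add p q : is_int p -> gfloor (p + q) = p + gfloor q.
Proof.
  intros [z ->]; unfold gfloor.
  rewrite <- (Int_part_spec (IZR z + q) (z + Int_part q)), plus_IZR; [reflexivity|].
  destruct (base_Int_part q); rewrite plus_IZR; lra.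
Qed.

Fixpoint grename {A B : Type} (f : A -> B) (e : gpexpr A) : gpexpr B :=
  match e with
  | gConst c => gConst c
  | gVar v => gVar (f v)
  | gAdd e1 e2 => gAdd (grename f e1) (grename f e2)
  | gMul e1 e2 => gMul (grename f e1) (grename f e2)
  | gFloor e1 => gFloor (grename f e1)
  end.

Lemma geval_grename {A B} (f : A -> B) (y : B -> R) e :
  geval y (grename f e) = geval (fun v => y (f v)) e.
Proof. induction e; cbn; congruence. Qed.

Lemma geval_ext {A} (y y' : A -> R) e : (forall v, y v = y' v) -> geval y e = geval y' e.
Proof. intros H; induction e; cbn; congruence. Qed.

Definition gsum {A V : Type} (f : A -> gpexpr V) (l : list A) : gpexpr V :=
  fold_right gAdd (gConst 0) (map f l).

Lemma geval_gsum {A V} (f : A -> gpexpr V) l y :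
  geval y (gsum f l) = sumR (fun a => geval y (f a)) l.
Proof. induction l as [|a l IH]; [reflexivity|]. now rewrite sumR_cons, <- IH. Qed.

Definition gfrac {V} (e : gpexpr V) : gpexpr V := gAdd e (gMul (gConst (-1)) (gFloor e)).

Lemma geval_gfrac {V} (x : V -> R) e : geval x (gfrac e) = frac_part (geval x e).
Proof. cbn; unfold frac_part, gfloor; ring. Qed.

(* Convertible to the valuation used in [gp_param]. *)
Definition with_arg {K} (y : K -> R) (n : Z) (o : option K) : R :=
  match o with Some k => y k | None => IZR n end.

Lemma geval_with_arg_rename {K L} (f : K -> L) (y : L -> R) n e :
  geval (with_arg y n) (grename (option_map f) e) = geval (with_arg (fun k => y (f k)) n) e.
Proof. rewrite geval_grename; apply geval_ext; now intros []. Qed.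

Section Combinations.
Variable V : Type.

Definition fracs {K} (b : K -> gpexpr V) (x : V -> R) (k : K) : R := frac_part (geval x (b k)).

Definition int_comb (E : (V -> R) -> Z -> R) : Prop :=
  exists (J K : Type) (lJ : list J), Listing lJ /\ Finite K /\
  exists (a : J -> gpexpr V) (b : K -> gpexpr V) (h : J -> gpexpr (option K)),
    (forall x j, is_int (geval x (a j))) /\
    (forall x n j, is_int (geval (with_arg (fracs b x) n) (h j))) /\
    (forall x n, E x n = sumR (fun j => geval x (a j) * geval (with_arg (fracs b x) n) (h j)) lJ).

Definition frac_gp (E : (V -> R) -> Z -> R) : Prop :=
  exists (K : Type) (b : K -> gpexpr V) (q : gpexpr (option K)), Finite K /\
    forall x n, E x n = geval (with_arg (fracs b x) n) q.

Definition real_comb (E : (V -> R) -> Z -> R) : Prop :=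
  exists l : list (gpexpr V * ((V -> R) -> Z -> R)),
    (forall p, In p l -> int_comb (snd p)) /\
    forall x n, E x n = sumR (fun p => geval x (fst p) * snd p x n) l.

Lemma int_comb_ext E E' : (forall x n, E x n = E' x n) -> int_comb E -> int_comb E'.
Proof.
  intros H (J & K & lJ & HJ & HK & a & b & h & Ha & Hh & HE).
  exists J, K, lJ; split; [|split]; auto.
  exists a, b, h; split; [|split]; auto.
  intros; rewrite <- H; auto.
Qed.

Lemma int_comb_is_int E : int_comb E -> forall x n, is_int (E x n).
Proof.
  intros (J & K & lJ & HJ & HK & a & b & h & Ha & Hh & HE) x n.
  rewrite HE; apply is_int_sumR; intros; now apply is_int_mul.
Qed.

Lemma int_comb_add E1 E2 : int_comb E1 -> int_comb E2 -> int_comb (fun x n => E1 x n + E2 x n).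
Proof.
  intros (J1 & K1 & lJ1 & HJ1 & HK1 & a1 & b1 & h1 & Ha1 & Hh1 & HE1)
         (J2 & K2 & lJ2 & HJ2 & HK2 & a2 & b2 & h2 & Ha2 & Hh2 & HE2).
  exists (J1 + J2)%type, (K1 + K2)%type, (map inl lJ1 ++ map inr lJ2).
  split; [now apply Listing_sum|]; split; [now apply Finite_sum|].
  exists (fun j => match j with inl j1 => a1 j1 | inr j2 => a2 j2 end),
    (fun k => match k with inl k1 => b1 k1 | inr k2 => b2 k2 end),
    (fun j => match j with
              | inl j1 => grename (option_map inl) (h1 j1)
              | inr j2 => grename (option_map inr) (h2 j2) end).
  split; [intros x [j|j]; auto|].
  split; [intros x n [j|j]; rewrite geval_with_arg_rename; [apply Hh1|apply Hh2]|].
  intros x n; rewrite sumR_app, !sumR_map, HE1, HE2.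
  f_equal; apply sumR_ext; intros j _; now rewrite geval_with_arg_rename.
Qed.

Lemma int_comb_mul E1 E2 : int_comb E1 -> int_comb E2 -> int_comb (fun x n => E1 x n * E2 x n).
Proof.
  intros (J1 & K1 & lJ1 & HJ1 & HK1 & a1 & b1 & h1 & Ha1 & Hh1 & HE1)
         (J2 & K2 & lJ2 & HJ2 & HK2 & a2 & b2 & h2 & Ha2 & Hh2 & HE2).
  exists (J1 * J2)%type, (K1 + K2)%type, (list_prod lJ1 lJ2).
  split; [now apply Listing_list_prod|]; split; [now apply Finite_sum|].
  exists (fun j => gMul (a1 (fst j)) (a2 (snd j))),
    (fun k => match k with inl k1 => b1 k1 | inr k2 => b2 k2 end),
    (fun j => gMul (grename (option_map inl) (h1 (fst j)))
                   (grename (option_map inr) (h2 (snd j)))).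
  split; [intros x [j1 j2]; now apply is_int_mul|].
  split; [intros x n [j1 j2]; cbn; rewrite !geval_with_arg_rename; apply is_int_mul; [apply Hh1|apply Hh2]|].
  intros x n; rewrite HE1, HE2, <- sumR_list_prod.
  apply sumR_ext; intros [j1 j2] _; cbn; rewrite !geval_with_arg_rename; unfold fracs; cbn; ring.
Qed.

Lemma frac_gp_of_arg (q : gpexpr (option Empty_set)) :
  frac_gp (fun _ n => geval (with_arg (Empty_set_rect _) n) q).
Proof.
  exists Empty_set, (Empty_set_rect _), q; split; [exact Finite_Empty_set|].
  intros x n; apply geval_ext; now intros [[]|].
Qed.

Lemma frac_gp_add E1 E2 : frac_gp E1 -> frac_gp E2 -> frac_gp (fun x n => E1 x n + E2 x n).
Proof.
  intros (K1 & b1 & q1 & HK1 & HE1) (K2 & b2 & q2 & HK2 & HE2).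
  exists (K1 + K2)%type, (fun k => match k with inl k1 => b1 k1 | inr k2 => b2 k2 end),
    (gAdd (grename (option_map inl) q1) (grename (option_map inr) q2)).
  split; [now apply Finite_sum|].
  intros x n; cbn; now rewrite !geval_with_arg_rename, HE1, HE2.
Qed.

Lemma frac_gp_gfloor E : frac_gp E -> int_comb (fun x n => gfloor (E x n)).
Proof.
  intros (K & b & q & HK & HE).
  exists unit, K, (tt :: nil); split; [exact Listing_unit|]; split; [exact HK|].
  exists (fun _ => gConst 1), b, (fun _ => gFloor q).
  split; [intros; now exists 1%Z|]; split; [intros; apply is_int_gfloor|].
  intros x n; cbn; rewrite HE; ring.
Qed.

Lemma int_comb_of_frac_gp E : frac_gp E -> (forall x n, is_int (E x n)) -> int_comb E.
Proof.
  intros HE Hint; apply (int_comb_ext (fun x n => gfloor (E x n))).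
  - intros x n; now apply gfloor_int.
  - now apply frac_gp_gfloor.
Qed.

(* The fractional parts {c a_j} become new fractional parameters. *)
Lemma int_comb_scale_split (c : gpexpr V) M : int_comb M ->
  exists P Q, int_comb P /\ frac_gp Q /\ forall x n, geval x c * M x n = P x n + Q x n.
Proof.
  intros (J & K & lJ & HJ & HK & a & b & h & Ha & Hh & HE).
  exists (fun x n => sumR (fun j => gfloor (geval x c * geval x (a j))
                                   * geval (with_arg (fracs b x) n) (h j)) lJ).
  exists (fun x n => sumR (fun j => frac_part (geval x c * geval x (a j))
                                   * geval (with_arg (fracs b x) n) (h j)) lJ).
  split; [|split].
  - exists J, K, lJ; split; [|split]; auto.
    exists (fun j => gFloor (gMul c (a j))), b, h; split; [intros; apply is_int_gfloor|]; auto.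
  - exists (K + J)%type,
      (fun k => match k with inl k => b k | inr j => gMul c (a j) end),
      (gsum (fun j => gMul (gVar (Some (inr j))) (grename (option_map inl) (h j))) lJ).
    split; [apply Finite_sum; [exact HK|exists lJ; apply HJ]|].
    intros x n; rewrite geval_gsum; apply sumR_ext; intros j _.
    cbn; now rewrite geval_with_arg_rename.
  - intros x n; rewrite HE, sumR_mull, <- sumR_plus.
    apply sumR_ext; intros j _; unfold frac_part, gfloor; ring.
Qed.

Lemma real_comb_split E : real_comb E ->
  exists P Q, int_comb P /\ frac_gp Q /\ forall x n, E x n = P x n + Q x n.
Proof.
  intros (l & Hl & HE); revert E HE.
  induction l as [|[c M] l IH]; intros E HE.
  - exists (fun _ _ => 0), (fun _ _ => 0).
    split; [apply int_comb_of_frac_gp; [exact (frac_gp_of_arg (gConst 0))|now exists 0%Z]|].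
    split; [exact (frac_gp_of_arg (gConst 0))|].
    intros x n; rewrite HE; cbn; ring.
  - destruct (IH (fun p H => Hl p (or_intror H)) _ (fun x n => eq_refl))
      as (P & Q & HP & HQ & HPQ).
    destruct (int_comb_scale_split c M (Hl _ (or_introl eq_refl)))
      as (P' & Q' & HP' & HQ' & HPQ').
    exists (fun x n => P' x n + P x n), (fun x n => Q' x n + Q x n).
    split; [now apply int_comb_add|]; split; [now apply frac_gp_add|].
    intros x n; rewrite HE; cbn; fold (sumR (fun p => geval x (fst p) * snd p x n) l).
    rewrite HPQ', HPQ; ring.
Qed.

Lemma real_comb_gfloor E : real_comb E -> int_comb (fun x n => gfloor (E x n)).
Proof.
  intros H; destruct (real_comb_split E H) as (P & Q & HP & HQ & HPQ).
  apply (int_comb_ext (fun x n => P x n + gfloor (Q x n))).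
  - intros x n; rewrite HPQ, gfloor_int_add; [reflexivity|now apply int_comb_is_int].
  - now apply int_comb_add, frac_gp_gfloor.
Qed.

Lemma real_comb_scale (c : gpexpr V) E : int_comb E -> real_comb (fun x n => geval x c * E x n).
Proof.
  intros H; exists ((c, E) :: nil); split.
  - now intros p [<-|[]].
  - intros x n; cbn; ring.
Qed.

Lemma real_comb_ext E E' : (forall x n, E x n = E' x n) -> real_comb E -> real_comb E'.
Proof. intros H (l & Hl & HE); exists l; split; [exact Hl|]; intros; rewrite <- H; auto. Qed.

Lemma real_comb_of_int_comb E : int_comb E -> real_comb E.
Proof.
  intros H; apply (real_comb_ext (fun x n => geval x (gConst 1) * E x n)).
  - intros; cbn; ring.
  - now apply real_comb_scale.
Qed.

Lemma real_comb_add E1 E2 : real_comb E1 -> real_comb E2 -> real_comb (fun x n => E1 x n + E2 x n).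
Proof.
  intros (l1 & H1 & HE1) (l2 & H2 & HE2); exists (l1 ++ l2); split.
  - intros p Hp; apply in_app_or in Hp as [Hp|Hp]; auto.
  - intros x n; now rewrite sumR_app, HE1, HE2.
Qed.

Lemma real_comb_mul E1 E2 : real_comb E1 -> real_comb E2 -> real_comb (fun x n => E1 x n * E2 x n).
Proof.
  intros (l1 & H1 & HE1) (l2 & H2 & HE2).
  exists (map (fun pq => (gMul (fst (fst pq)) (fst (snd pq)),
                          fun x n => snd (fst pq) x n * snd (snd pq) x n)) (list_prod l1 l2)).
  split.
  - intros p Hp; apply in_map_iff in Hp as [[p1 p2] [<- Hin]].
    apply in_prod_iff in Hin as [Hi1 Hi2]; cbn; apply int_comb_mul; auto.
  - intros x n; rewrite HE1, HE2, <- sumR_list_prod, sumR_map.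
    apply sumR_ext; intros [[c1 M1] [c2 M2]] _; cbn; ring.
Qed.

Lemma int_comb_one : int_comb (fun _ _ => 1).
Proof. apply int_comb_of_frac_gp; [exact (frac_gp_of_arg (gConst 1))|now exists 1%Z]. Qed.

Lemma real_comb_gp (e : gpexpr (option V)) : real_comb (fun x n => geval (with_arg x n) e).
Proof.
  induction e as [c|[v|]|e1 IH1 e2 IH2|e1 IH1 e2 IH2|e1 IH1]; cbn.
  - apply (real_comb_ext (fun x n => geval x (gConst c) * 1)); [intros; cbn; ring|].
    apply real_comb_scale, int_comb_one.
  - apply (real_comb_ext (fun x n => geval x (gVar v) * 1)); [intros; cbn; ring|].
    apply real_comb_scale, int_comb_one.
  - apply real_comb_of_int_comb, int_comb_of_frac_gp; [exact (frac_gp_of_arg (gVar None))|].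
    intros x n; now exists n.
  - now apply real_comb_add.
  - now apply real_comb_mul.
  - now apply real_comb_of_int_comb, real_comb_gfloor.
Qed.

End Combinations.

Arguments fracs {V K} b x k.

Section Extension.
Variables (Ir Ii If J K : Type) (lJ : list J).
Variables (a : J -> gpexpr (PVar Ir Ii If)) (b : K -> gpexpr (PVar Ir Ii If))
  (h : J -> gpexpr (option K)).

(* [Int_part] only makes these maps Z-valued: on the parameters that matter,
   its argument is already an integer. *)
Definition ext_coeff (j : J) (beta : PVar Empty_set Empty_set K -> R) (n : Z) : Z :=
  Int_part (geval (with_arg (fun k => beta (inr k)) n) (h j)).

Definition ext_map (y : PVar Empty_set J K -> R) (n : Z) : Z :=
  Int_part (sumR (fun j => y (inl (inr j)) * IZR (ext_coeff j (fun v => y (embK v)) n)) lJ).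

Definition ext_params (x : PVar Ir Ii If -> R) (v : PVar Empty_set J K) : R :=
  match v with
  | inl (inl e) => Empty_set_rect _ e
  | inl (inr j) => geval x (a j)
  | inr k => frac_part (geval x (b k))
  end.

Lemma gp_param_ext_coeff j : gp_param (ext_coeff j).
Proof.
  exists (gFloor (grename (option_map inr) (h j))); intros beta _ n.
  unfold ext_coeff; now rewrite <- (geval_with_arg_rename inr beta).
Qed.

Lemma gp_param_ext_map : gp_param ext_map.
Proof.
  exists (gFloor (gsum (fun j => gMul (gVar (Some (inl (inr j))))
                                      (gFloor (grename (option_map inr) (h j)))) lJ)).
  intros y _ n; unfold ext_map; cbn [geval]; rewrite (geval_gsum _ _ (with_arg y n)).
  unfold gfloor; do 2 f_equal; apply sumR_ext; intros j _.
  unfold ext_coeff; now rewrite <- (geval_with_arg_rename inr y).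
Qed.

Lemma ext_map_sumR y : in_Omega y -> forall n,
  IZR (ext_map y n) = sumR (fun j => y (inl (inr j)) * IZR (ext_coeff j (fun v => y (embK v)) n)) lJ.
Proof.
  intros [Hy _] n; apply gfloor_int, is_int_sumR; intros j _.
  apply is_int_mul; [apply Hy|now eexists].
Qed.

Hypothesis a_int : forall x j, is_int (geval x (a j)).

Lemma is_gp_map_ext_params : is_gp_map ext_params.
Proof.
  intros [[[]|j]|k]; [now exists (a j)|exists (gfrac (b k))].
  intros x; now rewrite geval_gfrac.
Qed.

Lemma in_Omega_ext_params x : in_Omega (ext_params x).
Proof.
  split; [intros j; destruct (a_int x j) as [z Hz]; now exists z|].
  intros k; destruct (base_fp (geval x (b k))); cbn; lra.
Qed.

Hypothesis h_int : forall x n j, is_int (geval (with_arg (fracs b x) n) (h j)).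

Lemma gp_extends_ext_map (g : (PVar Ir Ii If -> R) -> Z -> Z) :
  (forall x n, IZR (g x n) =
     sumR (fun j => geval x (a j) * geval (with_arg (fracs b x) n) (h j)) lJ) ->
  gp_extends g ext_map.
Proof.
  intros Hg; exists ext_params.
  split; [exact is_gp_map_ext_params|]; split; [intros x _; apply in_Omega_ext_params|].
  intros x _ n; apply eq_IZR.
  rewrite ext_map_sumR, Hg by apply in_Omega_ext_params.
  apply sumR_ext; intros j _; cbn; f_equal.
  symmetry; exact (gfloor_int _ (h_int x n j)).
Qed.

End Extension.

Lemma int_comb_extension {Ir Ii If} (g : (PVar Ir Ii If -> R) -> Z -> Z) :
  int_comb (PVar Ir Ii If) (fun x n => IZR (g x n)) ->
  exists (J K : Type) (lJ : list J),
    Listing lJ /\ Finite K /\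
    exists (gt : (PVar Empty_set J K -> R) -> Z -> Z)
           (h : J -> (PVar Empty_set Empty_set K -> R) -> Z -> Z),
      gp_param gt /\ gp_extends g gt /\ (forall j, gp_param (h j)) /\
      (forall y, in_Omega y -> forall n,
         IZR (gt y n) = sumR (fun j => y (inl (inr j)) * IZR (h j (fun v => y (embK v)) n)) lJ).
Proof.
  intros (J & K & lJ & HJ & HK & a & b & h & Ha & Hh & Hg).
  exists J, K, lJ; split; [exact HJ|]; split; [exact HK|].
  exists (ext_map J K lJ h), (ext_coeff J K h).
  split; [apply gp_param_ext_map|].
  split; [exact (gp_extends_ext_map Ir Ii If J K lJ a b h Ha Hh g Hg)|].
  split; [apply gp_param_ext_coeff|apply ext_map_sumR].
Qed.

Lemma in_Omega_real {I : Type} (x : PVar I Empty_set Empty_set -> R) : in_Omega x.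
Proof. split; intros []. Qed.

Theorem proposition3p4 :
  forall (I : Type), Finite I ->
  forall g : (PVar I Empty_set Empty_set -> R) -> Z -> Z,
    gp_param g ->
    exists (J K : Type) (lJ : list J),
      Listing lJ /\ Finite K /\
      exists (gt : (PVar Empty_set J K -> R) -> Z -> Z)
             (h : J -> (PVar Empty_set Empty_set K -> R) -> Z -> Z),
        gp_param gt /\ gp_extends g gt /\
        (forall j : J, gp_param (h j)) /\
        (forall x, in_Omega x -> forall n : Z,
           IZR (gt x n) =
           fold_right Rplus 0
             (map (fun j => x (inl (inr j)) * IZR (h j (fun v => x (embK v)) n)) lJ)).
Proof.
  intros I _ g [e He].
  apply int_comb_extension.
  apply (int_comb_ext _ (fun x n => gfloor (geval (with_arg x n) e))).
  - intros x n.
    assert (Hgx : geval (with_arg x n) e = IZR (g x n))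
      by (symmetry; exact (He x (in_Omega_real x) n)).
    rewrite Hgx; apply gfloor_int; now exists (g x n).
  - apply real_comb_gfloor, real_comb_gp.
Qed.
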